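(* Let $d/2<k<d$ be integers with $4k-d-2>(2k-d)^2$, and let $H_*$ be the Hessian matrix of $\varphi$ at $\mathbf b^*$. Then $$\det(-H_* )=\frac{2k^2}{(d-1)(2k-d)^2}\big(4k-d-2-(2k-d)^2\big)\prod_{i=0}^{d-k}\frac1{b_i^*}>0.$$ Furthermore, if $\mathbf b^*$ is the unique global maximum of $\varphi$ on $K$, then $H_*$ is negative definite.
   Context: $\chi_i=\frac{d!}{(k-i)!\,(d-k-i)!\,(i!)^2}$ for $i=0,\dots,d-k$; $b_i^*=(\frac d{2k})^2\binom dk^{-2}\chi_i$. For $\mathbf b\in\mathbb{R}^{d-k+1}$, $\beta_{\mathbf b}=\sum_i b_i$, $\gamma_{\mathbf b}=\sum_i(k-i)b_i$; $K=\{\mathbf b: \frac{d-k}{k}\le\beta_{\mathbf b}\le\frac d{2k},\ b_i\ge0\}$; with $g(x)=x\log x$ ($g(0)=0$), $\varphi(\mathbf b)=g(\gamma_{\mathbf b})+g(d/2-\gamma_{\mathbf b})-2g(\frac{d}{2k}-\beta_{\mathbf b})-g(1-\frac dk+\beta_{\mathbf b})-2\beta_{\mathbf b}\log\binom dk+\sum_i b_i\log\chi_i-\sum_i g(b_i)$. *)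

From HB Require Import structures.
From mathcomp Require Import all_boot all_order all_algebra.
From mathcomp Require Import all_classical all_reals all_analysis.
Set Implicit Arguments. Unset Strict Implicit. Unset Printing Implicit Defensive.
Import Order.TTheory GRing.Theory Num.Theory.
Import numFieldNormedType.Exports.
Local Open Scope ring_scope.

(* Vectors b = (b_0,...,b_{d-k}) are row vectors of size (d-k).+1 = d-k+1
   (we always have k < d in the theorem). Index i : 'I_(d-k).+1 is b_i. *)

Section Defs.
Variable R : realType.

Definition g (x : R) : R := if x == 0 then 0 else x * ln x.

Definition chi (d k i : nat) : R :=
  (d`!)%:R / ((k - i)`!%:R * (d - k - i)`!%:R * (i`!)%:R ^+ 2).

Definition bstar (d k : nat) : 'rV[R]_(d - k).+1 :=
  \row_(i < (d - k).+1)
    ((d%:R / (2 * k%:R)) ^+ 2 / ('C(d, k)%:R ^+ 2) * chi d k i).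

Definition betab (d k : nat) (b : 'rV[R]_(d - k).+1) : R :=
  \sum_(i < (d - k).+1) b 0 i.

Definition gammab (d k : nat) (b : 'rV[R]_(d - k).+1) : R :=
  \sum_(i < (d - k).+1) (k - i)%:R * b 0 i.

Definition Kset (d k : nat) : set 'rV[R]_(d - k).+1 :=
  [set b | ((d - k)%:R / k%:R <= betab b) && (betab b <= d%:R / (2 * k%:R))
           /\ forall i, 0 <= b 0 i].

Definition phi (d k : nat) (b : 'rV[R]_(d - k).+1) : R :=
  g (gammab b) + g (d%:R / 2 - gammab b)
  - 2 * g (d%:R / (2 * k%:R) - betab b)
  - g (1 - d%:R / k%:R + betab b)
  - 2 * betab b * ln ('C(d, k)%:R)
  + \sum_(i < (d - k).+1) b 0 i * ln (chi d k i)
  - \sum_(i < (d - k).+1) g (b 0 i).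

Definition hessian (n : nat) (f : 'rV[R]_n -> R) (x : 'rV[R]_n) : 'M[R]_n :=
  \matrix_(i < n, j < n)
     'D_(delta_mx 0 j) ('D_(delta_mx 0 i) f) x.

Definition neg_definite (n : nat) (H : 'M[R]_n) : Prop :=
  forall v : 'rV[R]_n, v != 0 -> (v *m H *m v^T) 0 0 < 0.

End Defs.

(* On the open set where every logarithm in [phi] has a positive argument, [phi]
   is a sum of terms x log x composed with the affine maps beta, gamma and the
   coordinates, so its Hessian is -(diag(1/b_i) + delta J - alpha u u^T) with
   u_i = k - i.  Sylvester's identity det(1 + AB) = det(1 + BA) reduces the
   determinant of this rank-two perturbation of a diagonal matrix to a 2x2
   determinant in the moments sum b_i, sum u_i b_i, sum u_i^2 b_i.  At b^*, which
   is proportional to C(k,i) C(d-k,i), these moments are Vandermonde convolutions.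
   For definiteness, fix s = sum v_i and t = sum u_i v_i: weighted Cauchy-Schwarz
   bounds sum v_i^2/b_i below by a quadratic form in (s, t), and the determinant
   condition makes the remaining binary form positive definite. *)

From HB Require Import structures.
From mathcomp Require Import all_boot all_order all_algebra.
From mathcomp Require Import all_classical all_reals all_analysis.
From mathcomp Require Import ring lra zify.
Import Order.TTheory GRing.Theory Num.Theory.
Import numFieldNormedType.Exports.
Local Open Scope ring_scope.

Section DiagPlusRank2.
Context {R : realFieldType}.

Lemma det1D_mulmxC n m (A : 'M[R]_(n, m)) (B : 'M[R]_(m, n)) :
  \det (1%:M + A *m B) = \det (1%:M + B *m A).
Proof.
have E1 : block_mx 1%:M (- A) B 1%:M =
    block_mx 1%:M 0 B 1%:M *m block_mx 1%:M (- A) 0 (1%:M + B *m A).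
  by rewrite mulmx_block !mulmx1 !mul1mx !mul0mx ?mulmx0 !addr0 mulmxN addrCA addNr addr0.
have E2 : block_mx 1%:M (- A) B 1%:M =
    block_mx (1%:M + A *m B) (- A) 0 1%:M *m block_mx 1%:M 0 B 1%:M.
  by rewrite mulmx_block !mulmx1 !mul1mx !mul0mx ?mulmx0 mulNmx addrK !add0r.
have := congr1 determinant E1; rewrite E2 !det_mulmx.
by rewrite !det_ublock !det_lblock !det1 !mul1r !mulr1.
Qed.

Lemma det_mx22 (M : 'M[R]_2) : \det M = M 0 0 * M 1 1 - M 0 1 * M 1 0.
Proof.
rewrite (expand_det_row _ 0) !big_ord_recl big_ord0 addr0 /cofactor !det_mx11 !mxE.
rewrite /= expr0 expr1 mul1r mulN1r.
by rewrite mulrN; congr (M _ _ * M _ _ - M _ _ * M _ _); apply: val_inj.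
Qed.

Lemma quad2_gt0 (a h c x y : R) :
  0 < a -> 0 < a * c - h ^+ 2 -> (x != 0) || (y != 0) ->
  0 < a * x ^+ 2 + 2 * h * x * y + c * y ^+ 2.
Proof.
move=> a_gt0 disc_gt0 xy.
rewrite -(pmulr_rgt0 _ a_gt0).
have -> : a * (a * x ^+ 2 + 2 * h * x * y + c * y ^+ 2) =
    (a * x + h * y) ^+ 2 + (a * c - h ^+ 2) * y ^+ 2 by ring.
case: (eqVneq y 0) xy => [-> | yN0 _].
  rewrite orbF mulr0 expr0n /= mulr0 !addr0 => xN0.
  by rewrite lt0r sqr_ge0 andbT sqrf_eq0 mulf_neq0 // gt_eqF.
by rewrite ltr_wpDl ?sqr_ge0 // mulr_gt0 // lt0r sqrf_eq0 yN0 sqr_ge0.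
Qed.

Section Forms.
Context {n : nat}.
Variables (b u : 'I_n -> R).
Hypothesis b_gt0 : forall i, 0 < b i.

Local Notation be := (\sum_i b i).
Local Notation ga := (\sum_i u i * b i).
Local Notation S2 := (\sum_i u i ^+ 2 * b i).
Local Notation D := (be * S2 - ga ^+ 2).

Definition diag_plus_rank2_mx (al de : R) : 'M[R]_n :=
  \matrix_(i, j) ((i == j)%:R / b i + de - al * u i * u j).

Lemma det_diag_plus_rank2 al de :
  \det (diag_plus_rank2_mx al de) =
  \prod_i (b i)^-1 * ((1 + de * be) * (1 - al * S2) + al * de * ga ^+ 2).
Proof.
have bN0 i : b i != 0 by rewrite gt_eqF.
pose A := \matrix_(i < n, l < 2) (if l == 0 then b i else u i * b i).
pose B := \matrix_(j < 2, i < n) (if j == 0 then de else - al * u i).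
have -> : diag_plus_rank2_mx al de = diag_mx (\row_i (b i)^-1) *m (1%:M + A *m B).
  apply/matrixP => i j; rewrite mul_diag_mx !mxE big_ord_recl big_ord1 !mxE /=.
  by field.
have BAE : B *m A = \matrix_(j, l) (if j == 0 then if l == 0 then de * be else de * ga
                                    else if l == 0 then - al * ga else - al * S2).
  apply/matrixP => j l; rewrite !mxE; under eq_bigr do rewrite !mxE.
  by case: j l => [[|[|]]] // _ [[|[|]]] //= _; rewrite mulr_sumr;
    apply: eq_bigr => i _; ring.
rewrite det_mulmx det_diag det1D_mulmxC BAE det_mx22 !mxE /=.
under eq_bigr do rewrite mxE.
by ring.
Qed.

Local Notation s v := (\sum_i v 0 i).
Local Notation t v := (\sum_i u i * v 0 i).

Lemma diag_plus_rank2_form al de (v : 'rV[R]_n) :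
  (v *m diag_plus_rank2_mx al de *m v^T) 0 0 =
  \sum_i v 0 i ^+ 2 / b i + de * s v ^+ 2 - al * t v ^+ 2.
Proof.
have col j : \sum_i v 0 i * diag_plus_rank2_mx al de i j =
    v 0 j / b j + de * s v - al * u j * t v.
  transitivity (\sum_i ((i == j)%:R * (v 0 i / b i) + de * v 0 i
                        - al * u j * (u i * v 0 i))).
    by apply: eq_bigr => i _; rewrite mxE; ring.
  rewrite sumrB big_split /= -!mulr_sumr (bigD1 j) //= eqxx mul1r big1 ?addr0 //.
  by move=> i /negbTE ->; rewrite mul0r.
rewrite mxE; under eq_bigr do rewrite !mxE col.
transitivity (\sum_j (v 0 j ^+ 2 / b j + (de * s v) * v 0 j - (al * t v) * (u j * v 0 j))).
  by apply: eq_bigr => j _; ring.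
by rewrite sumrB big_split /= -!mulr_sumr; ring.
Qed.

Lemma gram_form_le_sum_sq_div (v : 'rV[R]_n) : 0 < D ->
  S2 * s v ^+ 2 - 2 * ga * s v * t v + be * t v ^+ 2 <= D * \sum_i v 0 i ^+ 2 / b i.
Proof.
move=> D_gt0.
(* (lam, mu) is the adjugate of the Gram matrix of (1, u) for the b-weighted
   inner product, applied to (s, t). *)
pose lam := S2 * s v - ga * t v; pose mu := be * t v - ga * s v.
have residual : \sum_i (D * v 0 i - b i * (lam + mu * u i)) ^+ 2 / b i =
    D * (D * \sum_i v 0 i ^+ 2 / b i
         - (S2 * s v ^+ 2 - 2 * ga * s v * t v + be * t v ^+ 2)).
  transitivity (\sum_i (D ^+ 2 * (v 0 i ^+ 2 / b i) - (2 * D * lam) * v 0 i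
      - (2 * D * mu) * (u i * v 0 i) + lam ^+ 2 * b i + (2 * lam * mu) * (u i * b i)
      + mu ^+ 2 * (u i ^+ 2 * b i))).
    by apply: eq_bigr => i _; field; rewrite gt_eqF.
  by rewrite !big_split /= !sumrN -!mulr_sumr /lam /mu; ring.
rewrite -subr_ge0 -(pmulr_rge0 _ D_gt0) -residual.
by apply: sumr_ge0 => i _; rewrite divr_ge0 ?sqr_ge0 ?ltW.
Qed.

Lemma diag_plus_rank2_form_gt0 al de (v : 'rV[R]_n) :
  0 < D -> 0 <= de -> 0 < (1 + de * be) * (1 - al * S2) + al * de * ga ^+ 2 ->
  v != 0 -> 0 < (v *m diag_plus_rank2_mx al de *m v^T) 0 0.
Proof.
move=> D_gt0 de_ge0 bracket_gt0 vN0.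
have q_gt0 : 0 < \sum_i v 0 i ^+ 2 / b i.
  have [j vjN0] : exists j, v 0 j != 0.
    apply/existsP; apply: contraNT vN0; rewrite negb_exists => /forallP v0.
    by apply/eqP/rowP => j; rewrite mxE; apply/eqP; rewrite -[_ == _]negbK v0.
  rewrite (bigD1 j) //= ltr_wpDr ?sumr_ge0 // => [i _|].
    by rewrite divr_ge0 ?sqr_ge0 ?ltW.
  by rewrite divr_gt0 // lt0r sqrf_eq0 vjN0 sqr_ge0.
rewrite diag_plus_rank2_form.
have [st | ] := boolP ((s v != 0) || (t v != 0)); last first.
  by rewrite negb_or !negbK => /andP[/eqP -> /eqP ->]; rewrite expr0n /= !mulr0 subr0 addr0.
have S2_gt0 : 0 < S2.
  have be_ge0 : 0 <= be by apply: sumr_ge0 => i _; apply: ltW.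
  by have := sqr_ge0 ga; nra.
have form2_gt0 : 0 < (S2 + de * D) * s v ^+ 2 + 2 * (- ga) * s v * t v
                     + (be - al * D) * t v ^+ 2.
  apply: quad2_gt0 st; first by rewrite ltr_wpDr // mulr_ge0 // ltW.
  have -> : (S2 + de * D) * (be - al * D) - (- ga) ^+ 2 =
      D * ((1 + de * be) * (1 - al * S2) + al * de * ga ^+ 2) by ring.
  exact: mulr_gt0.
rewrite -(pmulr_rgt0 _ D_gt0); apply: (lt_le_trans form2_gt0).
rewrite -subr_ge0.
have -> : D * (\sum_i v 0 i ^+ 2 / b i + de * s v ^+ 2 - al * t v ^+ 2)
          - ((S2 + de * D) * s v ^+ 2 + 2 * (- ga) * s v * t v + (be - al * D) * t v ^+ 2)
    = D * \sum_i v 0 i ^+ 2 / b i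
      - (S2 * s v ^+ 2 - 2 * ga * s v * t v + be * t v ^+ 2) by ring.
by rewrite subr_ge0 gram_form_le_sum_sq_div.
Qed.

End Forms.

End DiagPlusRank2.

Lemma is_derive_ext {R : numFieldType} {V W : normedModType R} (f h : V -> W)
    (x v : V) (df : W) :
  is_derive x v f df -> f =1 h -> is_derive x v h df.
Proof. by move=> + /funext <-. Qed.

Section RowVectorLines.
Context {R : comPzRingType} {n : nat}.

Lemma sum_mul_delta (w : 'I_n -> R) i : \sum_j w j * (i == j)%:R = w i.
Proof.
rewrite (bigD1 i) //= eqxx mulr1 big1 ?addr0 // => j /negbTE.
by rewrite eq_sym => ->; rewrite mulr0.
Qed.

Lemma entry_line (x : 'rV[R]_n) i j t : (t *: 'e_i + x) 0 j = x 0 j + t * (i == j)%:R.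
Proof. by rewrite !mxE eqxx /= eq_sym addrC. Qed.

Lemma weighted_sum_line (w : 'I_n -> R) (x : 'rV[R]_n) i t :
  \sum_j w j * (t *: 'e_i + x) 0 j = \sum_j w j * x 0 j + t * w i.
Proof.
under eq_bigr do rewrite entry_line mulrDr mulrCA.
by rewrite big_split /= -mulr_sumr sum_mul_delta.
Qed.

End RowVectorLines.

Section DirectionalDerivatives.
Context {R : realType} {V : normedModType R}.

Lemma is_derive_along_line (f : V -> R) (x v : V) (df : R) :
  is_derive (0 : R) 1 (fun t : R => f (t *: v + x)) df -> is_derive x v f df.
Proof.
move=> [dl <-].
have E : (fun h : R => h^-1 *: ((f \o shift x) (h *: v) - f x)) =
   (fun h : R => h^-1 *: (((fun t => f (t *: v + x)) \o shift 0) (h *: 1)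
                 - (fun t => f (t *: v + x)) 0)).
  by apply/funext => h /=; rewrite addr0 scale0r add0r [_%:A]mulr1.
by apply: DeriveDef; [apply/derivable1P | rewrite /derive E].
Qed.

Lemma is_derive_comp_affine {G : R -> R} {L : V -> R} {x v : V} {c dG : R} :
  (forall t, L (t *: v + x) = L x + t * c) -> is_derive (L x) 1 G dG ->
  is_derive x v (fun y => G (L y)) (dG * c).
Proof.
move=> Lline dGx; apply: is_derive_along_line.
have affine : is_derive (0 : R) 1 (fun t : R => L x + t * c) c.
  have := is_deriveD (is_derive_cst (L x) (0 : R) 1) (is_deriveZ c (is_derive_id (0 : R) 1)).
  by rewrite add0r [c *: 1]mulr1 => /is_derive_ext; apply => t /=; rewrite mulrC.
rewrite -[in is_derive (L x) _ _ _](addr0 (L x)) -(mul0r c) in dGx.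
apply: is_derive_ext (is_derive1_comp (g := fun t => L x + t * c) dGx affine) _.
by move=> t /=; rewrite Lline.
Qed.

Lemma is_derive_affine {L : V -> R} {x v : V} {a : R} :
  (forall t, L (t *: v + x) = L x + t * a) -> is_derive x v L a.
Proof.
move=> Lline; rewrite -[a]mul1r.
exact: (is_derive_comp_affine (G := id) Lline (is_derive_id _ _)).
Qed.

Lemma continuous_weighted_sum {n : nat} (w : 'I_n -> R) :
  continuous (fun y : 'rV[R]_n => \sum_j w j * y 0 j).
Proof.
apply: (continuous_big add_continuous) => j _ y.
by apply: continuousM; [exact: cst_continuous | exact: coord_continuous].
Qed.

End DirectionalDerivatives.

Lemma is_derive_g {R : realType} {a : R} : 0 < a -> is_derive a 1 (@g R) (ln a + 1).
Proof.
move=> a0.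
apply: (@near_eq_is_derive _ _ _ (fun y : R => y * ln y)).
  near=> y; rewrite /g gt_eqF //.
  by near: y; exact: (cvgr_gt _ cvg_id 0 a0).
apply: is_derive_ext (is_derive_eq (is_deriveM (is_derive_id a 1) (is_derive1_ln a0)) _) _ => //.
by rewrite /= [_ *: _^-1]mulfV ?gt_eqF // [_ *: 1]mulr1 addrC.
Unshelve. all: by end_near. Qed.

Section PhiDerivatives.
Variables (R : realType) (d k : nat).
Local Notation n := (d - k).+1.
Local Notation V := 'rV[R]_n.
Local Notation e i := (delta_mx 0 i : V).
Local Notation c := (d%:R / (2 * k%:R) : R).
Local Notation u i := ((k - i)%:R : R).

Lemma betab_line (x : V) i t : betab (t *: e i + x) = betab x + t * 1.
Proof.
have := weighted_sum_line (fun=> 1) x i t; rewrite /betab.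
by under eq_bigr do rewrite mul1r; under [X in _ = X + _]eq_bigr do rewrite mul1r.
Qed.

Lemma gammab_line (x : V) i t : gammab (t *: e i + x) = gammab x + t * u i.
Proof. exact: weighted_sum_line. Qed.

Definition phi_dom (x : V) : Prop :=
  [/\ 0 < gammab x, 0 < d%:R / 2 - gammab x, 0 < c - betab x,
      0 < 1 - d%:R / k%:R + betab x & forall j, 0 < x 0 j].

Definition phi_grad (x : V) (i : 'I_n) : R :=
  u i * (ln (gammab x) - ln (d%:R / 2 - gammab x)) + 2 * ln (c - betab x)
  - ln (1 - d%:R / k%:R + betab x) - 2 * ln 'C(d, k)%:R + ln (chi R d k i)
  - ln (x 0 i).

Lemma is_derive_phi (x : V) i : phi_dom x -> is_derive x (e i) (@phi R d k) (phi_grad x i).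
Proof.
case=> g1 g2 b1 b2 x_gt0.
have D1 := is_derive_comp_affine (gammab_line x i) (is_derive_g g1).
have D2 : is_derive x (e i) (fun y => g (d%:R / 2 - gammab y))
                   ((ln (d%:R / 2 - gammab x) + 1) * - u i).
  apply: (is_derive_comp_affine (L := fun y => d%:R / 2 - gammab y) _ (is_derive_g g2)).
  by move=> t /=; rewrite gammab_line; ring.
have D3 : is_derive x (e i) (fun y => g (c - betab y)) ((ln (c - betab x) + 1) * - 1).
  apply: (is_derive_comp_affine (L := fun y => c - betab y) _ (is_derive_g b1)).
  by move=> t /=; rewrite betab_line; ring.
have D4 : is_derive x (e i) (fun y => g (1 - d%:R / k%:R + betab y))
                   ((ln (1 - d%:R / k%:R + betab x) + 1) * 1).
  apply: (is_derive_comp_affine (L := fun y => 1 - d%:R / k%:R + betab y) _ (is_derive_g b2)).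
  by move=> t /=; rewrite betab_line; ring.
have D5 : is_derive x (e i) (fun y => 2 * betab y * ln 'C(d, k)%:R) (2 * ln 'C(d, k)%:R).
  by apply: is_derive_affine => t; rewrite betab_line; ring.
have D6 : is_derive x (e i) (fun y => \sum_j y 0 j * ln (chi R d k j)) (ln (chi R d k i)).
  apply: is_derive_affine => t; under eq_bigr do rewrite mulrC.
  by rewrite weighted_sum_line; under eq_bigr do rewrite mulrC.
have D7 := is_derive_sum (fun j => is_derive_comp_affine (L := fun y : V => y 0 j)
  (entry_line x i j) (is_derive_g (x_gt0 j))).
have D := is_deriveB (is_deriveD (is_deriveB (is_deriveB (is_deriveB
  (is_deriveD D1 D2) (is_deriveZ 2 D3)) D4) D5) D6) D7.
apply: is_derive_ext (is_derive_eq D _) _.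
  by rewrite sum_mul_delta /phi_grad -[2 *: _]/(2 * _); ring.
by move=> y; rewrite /phi /= !fct_sumE.
Qed.

Lemma continuous_betab : continuous (@betab R d k).
Proof.
have -> : @betab R d k = (fun y : V => \sum_j 1 * y 0 j).
  by apply/funext => y; apply: eq_bigr => j _; rewrite mul1r.
exact: continuous_weighted_sum.
Qed.

Lemma near_phi_dom (x : V) : phi_dom x -> \forall y \near x, phi_dom y.
Proof.
case=> g1 g2 b1 b2 x_gt0.
have cg := continuous_weighted_sum (fun i => u i) x.
have cb := continuous_betab x.
have N1 := cvgr_gt _ cg _ g1.
have N2 := cvgr_lt _ cg (d%:R / 2) ltac:(by rewrite -subr_gt0).
have N3 := cvgr_lt _ cb c ltac:(by rewrite -subr_gt0).
have N4 := cvgr_gt _ cb (d%:R / k%:R - 1) ltac:(by rewrite -subr_gt0 opprB addrC).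
have N5 : \forall y \near x, forall j, 0 < (y : V) 0 j.
  apply: (@filter_forall V _ (fun j (y : V) => 0 < y 0 j) (nbhs x) _) => j.
  exact: (cvgr_gt _ (@coord_continuous R 1 n 0 j x) 0 (x_gt0 j)).
near=> y; split; last by near: y.
- by near: y; apply: N1.
- by rewrite subr_gt0; near: y; apply: N2.
- by rewrite subr_gt0; near: y; apply: N3.
- by rewrite -(opprB (d%:R / k%:R) 1) addrC subr_gt0; near: y; apply: N4.
Unshelve. all: by end_near. Qed.

Definition phi_curv_gamma (x : V) : R := (gammab x)^-1 + (d%:R / 2 - gammab x)^-1.

Definition phi_curv_beta (x : V) : R :=
  2 * (c - betab x)^-1 + (1 - d%:R / k%:R + betab x)^-1.

Lemma is_derive_phi_grad (x : V) i j : phi_dom x ->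
  is_derive x (e j) (fun y => phi_grad y i)
    (phi_curv_gamma x * u i * u j - phi_curv_beta x - (i == j)%:R / x 0 i).
Proof.
case=> g1 g2 b1 b2 x_gt0.
have E1 := is_derive_comp_affine (gammab_line x j) (is_derive1_ln g1).
have E2 : is_derive x (e j) (fun y => ln (d%:R / 2 - gammab y))
                   ((d%:R / 2 - gammab x)^-1 * - u j).
  apply: (is_derive_comp_affine (L := fun y => d%:R / 2 - gammab y) _ (is_derive1_ln g2)).
  by move=> t /=; rewrite gammab_line; ring.
have E3 : is_derive x (e j) (fun y => ln (c - betab y)) ((c - betab x)^-1 * - 1).
  apply: (is_derive_comp_affine (L := fun y => c - betab y) _ (is_derive1_ln b1)).
  by move=> t /=; rewrite betab_line; ring.
have E4 : is_derive x (e j) (fun y => ln (1 - d%:R / k%:R + betab y))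
                   ((1 - d%:R / k%:R + betab x)^-1 * 1).
  apply: (is_derive_comp_affine (L := fun y => 1 - d%:R / k%:R + betab y) _ (is_derive1_ln b2)).
  by move=> t /=; rewrite betab_line; ring.
have E5 := is_derive_comp_affine (L := fun y : V => y 0 i) (entry_line x j i)
  (is_derive1_ln (x_gt0 i)).
have D := is_deriveB (is_deriveD (is_deriveB (is_deriveB (is_deriveD
  (is_deriveZ (u i) (is_deriveB E1 E2)) (is_deriveZ 2 E3)) E4)
  (is_derive_cst (2 * ln 'C(d, k)%:R) x (e j))) (is_derive_cst (ln (chi R d k i)) x (e j))) E5.
apply: is_derive_ext (is_derive_eq D _) _ => //.
rewrite /phi_curv_gamma /phi_curv_beta eq_sym -[u i *: _]/(u i * _) -[2 *: _]/(2 * _).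
by ring.
Qed.

Lemma hessian_phi (x : V) : phi_dom x ->
  hessian (@phi R d k) x =
  - diag_plus_rank2_mx (x 0) (fun i => u i) (phi_curv_gamma x) (phi_curv_beta x).
Proof.
move=> x_dom; apply/matrixP => i j; rewrite !mxE.
rewrite (near_eq_derive (g := fun y => phi_grad y i)).
  have [_ ->] := is_derive_phi_grad x i j x_dom.
  by rewrite mulrAC; ring.
have := near_phi_dom x x_dom; apply: filterS => y y_dom.
by have [_ ->] := is_derive_phi y i y_dom.
Qed.

End PhiDerivatives.

Section BinomialMoments.
Local Open Scope nat_scope.
Variables k l : nat.

Lemma sum_bin_mul_bin (m : nat) : \sum_(i < l.+1) 'C(m, i) * 'C(l, i) = 'C(m + l, m).
Proof.
rewrite -[X in 'C(_, X)](addnK l m) bin_sub ?leq_addl // -binomial.Vandermonde.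
by apply: eq_bigr => i _; rewrite bin_sub // -ltnS.
Qed.

Lemma moment1_bin :
  \sum_(i < l.+1) (k - i) * ('C(k, i) * 'C(l, i)) = k * 'C(k.-1 + l, k.-1).
Proof.
rewrite -sum_bin_mul_bin big_distrr /=; apply: eq_bigr => i _.
by rewrite mulnA -mul_bin_down mulnA.
Qed.

Hypothesis lk : l < k.

Lemma moment2_bin :
  \sum_(i < l.+1) (k - i) ^ 2 * ('C(k, i) * 'C(l, i)) =
  k * k.-1 * 'C(k.-2 + l, k.-2) + k * 'C(k.-1 + l, k.-1).
Proof.
rewrite -!sum_bin_mul_bin !big_distrr -big_split /=; apply: eq_bigr => i _.
have ik : i < k by have := ltn_ord i; lia.
have E : (k - i) ^ 2 * 'C(k, i) = k * k.-1 * 'C(k.-2, i) + k * 'C(k.-1, i).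
  rewrite expnS expn1 -mulnA -mul_bin_down.
  have -> : k - i = (k.-1 - i).+1 by lia.
  by rewrite mulSn addnC mulnCA -mul_bin_down mulnA.
by rewrite mulnA E mulnDl !mulnA.
Qed.

End BinomialMoments.

Lemma bin_pred_ratio (R : numFieldType) (p q : nat) : (0 < q)%N -> (q <= p)%N ->
  'C(p.-1, q.-1)%:R = q%:R * 'C(p, q)%:R / p%:R :> R.
Proof.
move=> q_gt0 qp; have : (p * 'C(p.-1, q.-1))%N = (q * 'C(p, q))%N.
  by rewrite mul_bin_diag prednK.
move/(congr1 (fun m => m%:R : R)); rewrite !natrM => <-.
by rewrite [p%:R * _]mulrC mulfK // pnatr_eq0 -lt0n (leq_trans q_gt0).
Qed.

Section StationaryPoint.
Context {R : realType} {d k : nat}.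
Hypotheses (kd : (k < d)%N) (dk : (d < 2 * k)%N).
Local Notation n := (d - k).+1.
Local Notation c := (d%:R / (2 * k%:R) : R).
Local Notation u i := ((k - i)%:R : R).
Local Notation b := (bstar R d k 0).
Local Notation de := (2 * (c - c ^+ 2)^-1 + ((1 - c) ^+ 2)^-1).
Local Notation S2 := (d%:R * ((k%:R - 1) ^+ 2 + d%:R - 1) / (4 * (d%:R - 1)) : R).

Lemma k_gt0 : 0 < k%:R :> R. Proof. by rewrite ltr0n; lia. Qed.
Lemma d_gt1 : 1 < d%:R :> R. Proof. by rewrite ltr1n; lia. Qed.
Lemma k_lt_d : k%:R < d%:R :> R. Proof. by rewrite ltr_nat. Qed.
Lemma d_lt_2k : d%:R < 2 * k%:R :> R. Proof. by rewrite -natrM ltr_nat. Qed.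

Lemma d_neq0 : d%:R != 0 :> R.
Proof. by rewrite pnatr_eq0 -lt0n; lia. Qed.

Lemma d1_neq0 : d%:R - 1 != 0 :> R.
Proof. by rewrite subr_eq0 pnatr_eq1; lia. Qed.

Lemma k_neq0 : k%:R != 0 :> R.
Proof. by rewrite pnatr_eq0 -lt0n; lia. Qed.

Lemma twok_d_neq0 : 2 * k%:R - d%:R != 0 :> R.
Proof. by rewrite subr_eq0 gt_eqF ?d_lt_2k. Qed.

Lemma bin_neq0 : 'C(d, k)%:R != 0 :> R.
Proof. by rewrite pnatr_eq0 -lt0n bin_gt0 ltnW. Qed.

Lemma chi_bin (i : 'I_n) : chi R d k i = ('C(d, k) * ('C(k, i) * 'C(d - k, i)))%:R.
Proof.
have ik : (i <= k)%N by have := ltn_ord i; lia.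
have idk : (i <= d - k)%N by have := ltn_ord i; rewrite ltnS.
have fact_id : ('C(d, k) * ('C(k, i) * 'C(d - k, i))
                * ((k - i)`! * (d - k - i)`! * (i`! ^ 2)))%N = d`!.
  rewrite -(bin_fact (ltnW kd)) -{1}(bin_fact ik) -(bin_fact idk); ring.
rewrite /chi -fact_id natrM -!natrM -natrX -!natrM [X in X / _]natrM mulfK //.
Qed.

Lemma bstar_bin (i : 'I_n) : b i = c ^+ 2 / 'C(d, k)%:R * ('C(k, i) * 'C(d - k, i))%:R.
Proof.
rewrite /bstar mxE chi_bin natrM; field.
by rewrite bin_neq0 k_neq0.
Qed.

Lemma sum_bstar : \sum_i b i = c ^+ 2.
Proof.
under eq_bigr do rewrite bstar_bin.
by rewrite -mulr_sumr -natr_sum sum_bin_mul_bin subnKC ?mulfVK ?bin_neq0 // ltnW.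
Qed.

Lemma sum_u_bstar : \sum_(i < n) u i * b i = d%:R / 4.
Proof.
under eq_bigr => i _ do rewrite bstar_bin mulrCA -[u i * _]natrM.
rewrite -mulr_sumr -natr_sum moment1_bin (_ : (k.-1 + (d - k))%N = d.-1); last by lia.
rewrite natrM bin_pred_ratio; [|lia..].
field.
by rewrite bin_neq0 d_neq0 k_neq0.
Qed.

Lemma sum_u2_bstar : \sum_(i < n) u i ^+ 2 * b i = S2.
Proof.
under eq_bigr => i _ do rewrite bstar_bin mulrCA -natrX -[_ * ('C(k, i) * _)%:R]natrM.
rewrite -mulr_sumr -natr_sum moment2_bin; last by lia.
have -> : (k.-2 + (d - k))%N = d.-2 by lia.
have -> : (k.-1 + (d - k))%N = d.-1 by lia.
have k1 : (k.-1)%:R = k%:R - 1 :> R by rewrite -subn1 natrB //; lia.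
have d1 : (d.-1)%:R = d%:R - 1 :> R by rewrite -subn1 natrB //; lia.
rewrite natrD !natrM bin_pred_ratio; [|lia..].
rewrite bin_pred_ratio; [|lia..].
by rewrite k1 d1; field; rewrite d1_neq0 d_neq0 bin_neq0 k_neq0.
Qed.

Lemma c_gt0 : 0 < c.
Proof. by rewrite divr_gt0 ?mulr_gt0 ?k_gt0 // (lt_trans _ d_gt1). Qed.

Lemma c_lt1 : c < 1.
Proof. by rewrite ltr_pdivrMr ?mul1r ?d_lt_2k // mulr_gt0 ?k_gt0. Qed.

Lemma one_sub_c_sqr : 1 - d%:R / k%:R + c ^+ 2 = (1 - c) ^+ 2.
Proof. by field; rewrite k_neq0. Qed.

Lemma bstar_gt0 (i : 'I_n) : 0 < b i.
Proof.
rewrite bstar_bin mulr_gt0 ?divr_gt0 ?exprn_gt0 ?c_gt0 ?ltr0n ?bin_gt0 ?(ltnW kd) //.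
by rewrite muln_gt0 !bin_gt0; have := ltn_ord i; lia.
Qed.

Lemma phi_dom_bstar : phi_dom R d k (bstar R d k).
Proof.
have := d_gt1; have := c_gt0; have := c_lt1 => c0 c1 d1.
split; rewrite /gammab /betab ?sum_u_bstar ?sum_bstar ?one_sub_c_sqr.
- lra.
- lra.
- by rewrite -[c in c - _]mulr1 -mulrBr mulr_gt0 // subr_gt0.
- by rewrite exprn_gt0 // subr_gt0.
- exact: bstar_gt0.
Qed.

Lemma hessian_phi_bstar :
  hessian (@phi R d k) (bstar R d k) = - diag_plus_rank2_mx b (fun i => u i) (8 / d%:R) de.
Proof.
rewrite hessian_phi; last exact: phi_dom_bstar.
rewrite /phi_curv_gamma /phi_curv_beta /gammab /betab.
rewrite sum_u_bstar sum_bstar one_sub_c_sqr.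
have -> : d%:R / 2 - d%:R / 4 = d%:R / 4 :> R by field.
by congr (- diag_plus_rank2_mx _ _ _ _); field; rewrite d_neq0.
Qed.

Lemma curv_beta_bstar_ge0 : 0 <= de.
Proof.
have c_c2 : 0 < c - c ^+ 2.
  by rewrite -[c in c - _]mulr1 -mulrBr mulr_gt0 ?c_gt0 // subr_gt0 c_lt1.
apply: addr_ge0; last by rewrite invr_ge0 sqr_ge0.
by rewrite mulr_ge0 // invr_ge0 ltW.
Qed.

Lemma gram_det_bstar_gt0 : 0 < c ^+ 2 * S2 - (d%:R / 4) ^+ 2.
Proof.
have -> : c ^+ 2 * S2 - (d%:R / 4) ^+ 2 =
    d%:R ^+ 2 * (d%:R - k%:R) ^+ 2 / (16 * k%:R ^+ 2 * (d%:R - 1)).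
  by field; rewrite d1_neq0 k_neq0.
have := d_gt1; have := k_lt_d; have := k_gt0 => k0 kd' d1.
by rewrite divr_gt0 ?mulr_gt0 ?exprn_gt0 ?subr_gt0 //; lra.
Qed.

Lemma det_factor_bstar :
  (1 + de * c ^+ 2) * (1 - 8 / d%:R * S2) + 8 / d%:R * de * (d%:R / 4) ^+ 2 =
  2 * k%:R ^+ 2 / ((d%:R - 1) * (2 * k%:R - d%:R) ^+ 2)
  * (4 * k%:R - d%:R - 2 - (2 * k%:R - d%:R) ^+ 2).
Proof.
field.
have -> : d%:R * (2 * k%:R) - d%:R ^+ 2 = d%:R * (2 * k%:R - d%:R) :> R by ring.
by rewrite mulf_neq0 ?twok_d_neq0 ?d1_neq0 ?k_neq0 ?d_neq0.
Qed.

Lemma det_factor_bstar_gt0 :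
  (2 * k%:R - d%:R) ^+ 2 < 4 * k%:R - d%:R - 2 :> R ->
  0 < (1 + de * c ^+ 2) * (1 - 8 / d%:R * S2) + 8 / d%:R * de * (d%:R / 4) ^+ 2.
Proof.
rewrite det_factor_bstar -subr_gt0 => pos.
have := d_gt1; have := d_lt_2k => d2k d1.
by rewrite mulr_gt0 // divr_gt0 ?mulr_gt0 ?exprn_gt0 ?k_gt0 ?subr_gt0.
Qed.

End StationaryPoint.

Theorem lemma12 (R : realType) (d k : nat) :
  (d < 2 * k)%N -> (k < d)%N ->
  (2 * k%:R - d%:R) ^+ 2 < 4 * k%:R - d%:R - 2 :> R ->
  let Hs := hessian (@phi R d k) (bstar R d k) in
  \det (- Hs) =
    2 * k%:R ^+ 2 / ((d%:R - 1) * (2 * k%:R - d%:R) ^+ 2)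
    * (4 * k%:R - d%:R - 2 - (2 * k%:R - d%:R) ^+ 2)
    * \prod_(i < (d - k).+1) (bstar R d k 0 i)^-1
  /\ 0 < \det (- Hs)
  /\ ((bstar R d k \in @Kset R d k /\
       forall b, b \in @Kset R d k -> b != bstar R d k ->
                 @phi R d k b < @phi R d k (bstar R d k)) ->
      neg_definite Hs).
Proof.
move=> dk kd hyp Hs.
have b_gt0 : forall i, 0 < bstar R d k 0 i := bstar_gt0 kd dk.
have bracket_gt0 := det_factor_bstar_gt0 (R := R) kd dk hyp.
rewrite /Hs hessian_phi_bstar // opprK det_diag_plus_rank2 //.
rewrite sum_bstar // sum_u_bstar // sum_u2_bstar //.
split; first by rewrite det_factor_bstar // mulrC.
split; first by rewrite mulr_gt0 // prodr_gt0 // => i _; rewrite invr_gt0.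
move=> _ v vN0; rewrite mulmxN mulNmx mxE oppr_lt0.
apply: diag_plus_rank2_form_gt0 => //.
- by rewrite sum_bstar // sum_u_bstar // sum_u2_bstar // gram_det_bstar_gt0.
- exact: curv_beta_bstar_ge0.
- by rewrite sum_bstar // sum_u_bstar // sum_u2_bstar.
Qed.
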